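(* Let $n\ge 2$ and let $\mathcal{S}=\{\mathbf{s}\in\mathbb{R}^n:\tfrac12\mathbf{s}^TA\mathbf{s}+\mathbf{b}^T\mathbf{s}+c=0\}$ be a quadric hypersurface, where $A$ is a real symmetric $n\times n$ matrix different from the zero matrix, $\mathbf{b}\in\mathbb{R}^n$, $c\in\mathbb{R}$. Suppose $\mathcal{S}$ does not contain a line but contains at least two points. Then there exist a vector function $\boldsymbol{\sigma}=(\sigma_1,\dots,\sigma_n)^T$ with rational components in $n-1$ variables and a domain $D\subseteq\mathbb{R}^{n-1}$ such that $\{\boldsymbol{\sigma}(\mathbf{t}):\mathbf{t}\in D\}$ is a rationally parameterisable hypersurface coinciding with $\mathcal{S}$ up to an exceptional set of hypersurface measure zero, and every nonempty open subset $O$ of $D\setminus\sigma_1^{-1}(0)$ in $\mathbb{R}^{n-1}$ satisfies the hyperplane condition and the inner point condition.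
   Context: A rationally parameterisable hypersurface is a set $\{\boldsymbol{\sigma}(\mathbf{t}):\mathbf{t}\in D\}\subseteq\mathbb{R}^n$, where $\boldsymbol{\sigma}:\mathbb{R}^{n-1}\to\mathbb{R}^n$ has rational functions as components and $D\subseteq\mathbb{R}^{n-1}$ is a set on which they are all defined. $\sigma_1^{-1}(0)$ is the zero set of $\sigma_1$. The normalized function is $\hat{\boldsymbol{\sigma}}(\mathbf{t})=(\sigma_2(\mathbf{t})/\sigma_1(\mathbf{t}),\dots,\sigma_n(\mathbf{t})/\sigma_1(\mathbf{t}))^T$ for $\mathbf{t}\in D\setminus\sigma_1^{-1}(0)$. For an open $O\subseteq D\setminus\sigma_1^{-1}(0)$: the hyperplane condition means $\boldsymbol{\sigma}(O)$ is not contained in any (affine) hyperplane of $\mathbb{R}^n$; the inner point condition means there is $\mathbf{t}\in O$ such that $\hat{\boldsymbol{\sigma}}(\mathbf{t})$ is an interior point of $\hat{\boldsymbol{\sigma}}(O)=\{\hat{\boldsymbol{\sigma}}(\mathbf{t}'):\mathbf{t}'\in O\}$ in $\mathbb{R}^{n-1}$. *)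

(* R : realType, vectors in R^m are column vectors 'cV[R]_m
   (with the product = Euclidean topology of mathcomp-analysis). *)
From HB Require Import structures.
From mathcomp Require Import all_boot all_order all_algebra.
From mathcomp Require Import all_classical all_reals all_analysis.
Set Implicit Arguments. Unset Strict Implicit. Unset Printing Implicit Defensive.
Import Order.TTheory GRing.Theory Num.Theory.
Import numFieldNormedType.Exports.
Local Open Scope classical_set_scope.
Local Open Scope ring_scope.

(* A real polynomial in m variables, given as a finite list of monomials
   (coefficient, exponent vector). *)
Definition mpolyfun (R : realType) (m : nat) := seq (R * {ffun 'I_m -> nat}).

Definition peval (R : realType) (m : nat) (p : mpolyfun R m) (t : 'cV[R]_m) : R :=
  \sum_(u <- p) u.1 * \prod_(i < m) (t i ord0) ^+ (u.2 i).

Record ratvecfun (R : realType) (m n : nat) := RatVecFun {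
  rv_num : 'I_n -> mpolyfun R m;
  rv_den : 'I_n -> mpolyfun R m }.

Definition defined_on (R : realType) (m n : nat) (sig : ratvecfun R m n)
    (D : set 'cV[R]_m) : Prop :=
  forall t, D t -> forall i, peval (rv_den sig i) t != 0.

Definition rveval (R : realType) (m n : nat) (sig : ratvecfun R m n)
    (t : 'cV[R]_m) : 'cV[R]_n :=
  \col_i (peval (rv_num sig i) t / peval (rv_den sig i) t).

Definition quadric (R : realType) (n : nat) (A : 'M[R]_n) (b : 'cV[R]_n) (c : R)
    : set 'cV[R]_n :=
  [set s | 2^-1 * (s^T *m A *m s) ord0 ord0 + (b^T *m s) ord0 ord0 + c = 0].

Definition contains_line (R : realType) (n : nat) (S : set 'cV[R]_n) : Prop :=
  exists (p v : 'cV[R]_n), v != 0 /\ forall lam : R, S (p + lam *: v).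

(* H^s(E) = 0 for the s-dimensional Hausdorff measure on R^n (Euclidean metric):
   for every delta > 0 the delta-approximating content H^s_delta(E) is 0, i.e.
   for every eps > 0 there is a countable cover of E by sets U_i of diameter
   at most d_i < delta with sum_i d_i^s <= eps (the normalising constant of
   Hausdorff measure is irrelevant for null sets). *)
Definition hausdorff_null (R : realType) (n s : nat) (E : set 'cV[R]_n) : Prop :=
  forall delta eps : R, 0 < delta -> 0 < eps ->
  exists (U : nat -> set 'cV[R]_n) (d : nat -> R),
    E `<=` \bigcup_i U i /\
    (forall i, 0 <= d i /\ d i < delta) /\
    (forall i x y, U i x -> U i y ->
        \sum_(j < n) (x j ord0 - y j ord0) ^+ 2 <= d i ^+ 2) /\
    (forall N, \sum_(i < N) d i ^+ s < eps).

(* Conditions for a parameterisation of R^{k+1} by k parameters.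
   Component sigma_1 is index ord0; sigma_{j+2} is index (lift ord0 j). *)
Definition normalized (R : realType) (k : nat) (f : 'cV[R]_k -> 'cV[R]_k.+1)
    (t : 'cV[R]_k) : 'cV[R]_k :=
  \col_(j < k) (f t (lift ord0 j) ord0 / f t ord0 ord0).

Definition hyperplane_cond (R : realType) (m n : nat) (f : 'cV[R]_m -> 'cV[R]_n)
    (O : set 'cV[R]_m) : Prop :=
  ~ exists (a : 'cV[R]_n) (beta : R),
      a != 0 /\ forall t, O t -> (a^T *m f t) ord0 ord0 = beta.

Definition inner_point_cond (R : realType) (k : nat) (f : 'cV[R]_k -> 'cV[R]_k.+1)
    (O : set 'cV[R]_k) : Prop :=
  exists t, O t /\ interior (normalized f @` O) (normalized f t).

(* Stereographic projection from a point [p] of the quadric [S] at which the gradient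
   [g = A p + b] is nonzero; such a point exists because [S] has two points and contains
   no line.  Fix a coordinate [i0] with [g i0 <> 0].  Directions [v] normalised by
   [g.v = g i0] are parametrised by their other coordinates [t], and the line [p + l v]
   meets [S] again for [l = -2 g i0 / vAv]; this rational map [stereo] is a bijection from
   [{t | vAv <> 0}] onto [S] minus [p], because a quadric without lines satisfies
   [g.(s - p) <> 0] for all its points [s <> p].
   If [stereo] mapped an open set into a hyperplane [a.x = beta], clearing denominators
   would give a polynomial identity in [t] whose coefficients force either [a = 0] or an
   isotropic tangent direction at [p], i.e. a line in [S].
   For the inner point condition pick [t] with [b.stereo t + 2c <> 0]: then the ray from
   the origin through [stereo t] crosses [S] transversally, so by the intermediate value
   theorem the rays in nearby directions cross [S] near [stereo t], and the central
   projection of [stereo @` O] covers a neighbourhood. *)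

From HB Require Import structures.
From mathcomp Require Import all_boot all_order all_algebra.
From mathcomp Require Import all_classical all_reals all_analysis.
From mathcomp Require Import ring lra.
Set Implicit Arguments. Unset Strict Implicit. Unset Printing Implicit Defensive.
Import Order.TTheory GRing.Theory Num.Theory.
Import numFieldNormedType.Exports.
Local Open Scope classical_set_scope.
Local Open Scope ring_scope.

Section BilinearForm.
Variables (R : comPzRingType) (n : nat).
Implicit Types (A : 'M[R]_n) (a u v w : 'cV[R]_n).

Definition dot a v : R := (a^T *m v) ord0 ord0.
Definition bform A u v : R := (u^T *m A *m v) ord0 ord0.

Lemma dotE a v : dot a v = \sum_i a i ord0 * v i ord0.
Proof. by rewrite /dot mxE; apply: eq_bigr => i _; rewrite mxE. Qed.

Lemma bformE A u v : bform A u v = \sum_i \sum_j u i ord0 * A i j * v j ord0.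
Proof.
rewrite /bform mxE exchange_big /=; apply: eq_bigr => j _.
by rewrite mxE mulr_suml; apply: eq_bigr => i _; rewrite !mxE.
Qed.

Lemma dotC a v : dot a v = dot v a.
Proof. by rewrite /dot -[in RHS](trmxK a) -trmx_mul [RHS]mxE. Qed.

Lemma dotDl a u v : dot (a + u) v = dot a v + dot u v.
Proof. by rewrite /dot linearD mulmxDl mxE. Qed.

Lemma dotDr a u v : dot a (u + v) = dot a u + dot a v.
Proof. by rewrite /dot mulmxDr mxE. Qed.

Lemma dotZr a v l : dot a (l *: v) = l * dot a v.
Proof. by rewrite /dot -scalemxAr mxE. Qed.

Lemma dotBr a u v : dot a (u - v) = dot a u - dot a v.
Proof. by rewrite /dot mulmxBr !mxE. Qed.

Lemma dot_delta a i : dot a (delta_mx i ord0) = a i ord0.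
Proof.
rewrite dotE (bigD1 i) //= mxE !eqxx mulr1 big1 ?addr0 // => j /negbTE ji.
by rewrite mxE ji mulr0.
Qed.

Lemma dot_col m a (M : 'M[R]_(n, m)) j : dot a (col j M) = (a^T *m M) ord0 j.
Proof. by rewrite /dot colE mulmxA -colE mxE. Qed.

Lemma dot0l v : dot 0 v = 0.
Proof. by rewrite /dot trmx0 mul0mx mxE. Qed.

Lemma dot_mulmx A u v : dot (A *m u) v = bform A^T u v.
Proof. by rewrite /dot /bform trmx_mul. Qed.

Lemma bformDl A u v w : bform A (u + v) w = bform A u w + bform A v w.
Proof. by rewrite /bform linearD !mulmxDl mxE. Qed.

Lemma bformDr A u v w : bform A u (v + w) = bform A u v + bform A u w.
Proof. by rewrite /bform mulmxDr mxE. Qed.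

Lemma bformZl A u v l : bform A (l *: u) v = l * bform A u v.
Proof. by rewrite /bform linearZ /= -!scalemxAl mxE. Qed.

Lemma bformZr A u v l : bform A u (l *: v) = l * bform A u v.
Proof. by rewrite /bform -scalemxAr mxE. Qed.

Lemma bformC A u v : A^T = A -> bform A u v = bform A v u.
Proof.
move=> symA; rewrite /bform; have -> : v^T *m A *m u = (u^T *m A *m v)^T.
  by rewrite !trmx_mul trmxK symA mulmxA.
by rewrite [RHS]mxE.
Qed.

End BilinearForm.

Lemma cV_neq0_coord (R : nmodType) n (v : 'cV[R]_n) : v != 0 -> exists i, v i ord0 != 0.
Proof.
move=> v0; apply/existsP; apply: contraNT v0 => /existsPn v0.
apply/eqP/matrixP => i j; have -> : j = ord0 := ord1 j.
by move: (v0 i); rewrite negbK [RHS]mxE => /eqP.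
Qed.

Section QuadricGeometry.
Variables (R : realType) (n : nat) (A : 'M[R]_n) (b : 'cV[R]_n) (c : R).
Hypothesis symA : A^T = A.
Local Notation S := (quadric A b c).

Definition quadval s := 2^-1 * bform A s s + dot b s + c.
Definition grad p := A *m p + b.

Lemma quadricE s : S s <-> quadval s = 0.
Proof. by []. Qed.

Lemma dot_grad p v : dot (grad p) v = bform A p v + dot b v.
Proof. by rewrite /grad dotDl dot_mulmx symA. Qed.

Lemma quadvalDr p v :
  quadval (p + v) = quadval p + dot (grad p) v + 2^-1 * bform A v v.
Proof.
by rewrite dot_grad /quadval !bformDl !bformDr dotDr (bformC v p) //; field.
Qed.

Lemma isotropic_tangent_eq0 p w : ~ contains_line S -> S p ->
  dot (grad p) w = 0 -> bform A w w = 0 -> w = 0.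
Proof.
move=> noline /quadricE Sp gw ww; have [//|w0] := eqVneq w 0; case: noline.
exists p, w; split=> // l; apply/quadricE.
by rewrite quadvalDr dotZr bformZl bformZr gw ww Sp; ring.
Qed.

Lemma bform_chord p s : S p -> S s -> bform A (s - p) (s - p) = - 2 * dot (grad p) (s - p).
Proof.
move=> /quadricE Sp /quadricE; rewrite -[s in quadval s](addrNK p) addrC.
by rewrite quadvalDr Sp add0r => h; lra.
Qed.

Lemma dot_grad_chord_neq0 p s : ~ contains_line S -> S p -> S s -> s != p ->
  dot (grad p) (s - p) != 0.
Proof.
move=> noline Sp Ss sp; apply/eqP => g0.
have := isotropic_tangent_eq0 noline Sp g0.
by rewrite bform_chord // g0 mulr0 => /(_ erefl) /eqP; rewrite subr_eq0 (negbTE sp).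
Qed.

Lemma grad_neq0 p s : ~ contains_line S -> S p -> S s -> s != p -> grad p != 0.
Proof.
move=> noline Sp Ss sp; apply: contraNneq (dot_grad_chord_neq0 noline Sp Ss sp).
by move=> ->; rewrite dot0l.
Qed.

Lemma dot_grad_self s : S s -> dot (grad s) s = - (dot b s + 2 * c).
Proof. by move=> /quadricE; rewrite dot_grad /quadval => h; lra. Qed.

Lemma quadric_cone_eq0 s : b = 0 -> c = 0 -> ~ contains_line S -> S s -> s = 0.
Proof.
move=> b0 c0 noline /quadricE Ss.
have S0 : S 0 by rewrite quadricE /quadval /bform trmx0 !mul0mx mxE b0 dot0l c0; ring.
apply: (isotropic_tangent_eq0 noline S0); first by rewrite /grad mulmx0 b0 addr0 dot0l.
by move: Ss; rewrite /quadval b0 c0 dot0l => h; lra.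
Qed.

End QuadricGeometry.

Section TangentChart.
Variables (R : fieldType) (k : nat) (g : 'cV[R]_k.+1) (i0 : 'I_k.+1).
Hypothesis gi0 : g i0 ord0 != 0.
Implicit Types (t : 'cV[R]_k) (a v : 'cV[R]_k.+1).

Lemma dot_lift a v :
  dot a v = a i0 ord0 * v i0 ord0 + \sum_j a (lift i0 j) ord0 * v (lift i0 j) ord0.
Proof. by rewrite dotE (bigD1_ord i0). Qed.

Definition tanmx : 'M[R]_(k.+1, k) := \matrix_(i, j)
  oapp (fun j' => (j' == j)%:R) (- g (lift i0 j) ord0 / g i0 ord0) (unlift i0 i).

Definition dir t : 'cV[R]_k.+1 := delta_mx i0 ord0 + tanmx *m t.

Lemma dirDZ t e l : dir (t + l *: e) = dir t + l *: (tanmx *m e).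
Proof. by rewrite /dir mulmxDr -scalemxAr addrA. Qed.

Lemma row'_tanmx t : row' i0 (tanmx *m t) = t.
Proof.
have -> : row' i0 (tanmx *m t) = row' i0 tanmx *m t by rewrite !row'Esub mul_rowsub_mx.
suff -> : row' i0 tanmx = 1%:M by rewrite mul1mx.
by apply/matrixP => j j'; rewrite !mxE liftK.
Qed.

Lemma row'_dir t : row' i0 (dir t) = t.
Proof.
rewrite -[RHS]row'_tanmx; apply/matrixP => j j'.
by rewrite !mxE lift_eqF add0r.
Qed.

Lemma col_tanmx j : col j tanmx =
  delta_mx (lift i0 j) ord0 - (g (lift i0 j) ord0 / g i0 ord0) *: delta_mx i0 ord0.
Proof.
apply/matrixP => i j'; have -> : j' = ord0 := ord1 j'.
rewrite !mxE; case: (unliftP i0 i) => [l ->|->] /=.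
  by rewrite lift_eqF (inj_eq lift_inj) eqxx andbT mulr0 subr0.
by rewrite eq_liftF !eqxx /= mulr1n mulr1 sub0r mulNr.
Qed.

Lemma col_tanmx_neq0 j : col j tanmx != 0.
Proof.
apply/eqP => /matrixP/(_ (lift i0 j) ord0); rewrite col_tanmx !mxE lift_eqF !eqxx /=.
by rewrite mulr0 subr0 => /eqP; rewrite oner_eq0.
Qed.

Lemma trmx_tanmx : g^T *m tanmx = 0.
Proof.
apply/matrixP => i j; have -> : i = ord0 := ord1 i.
by rewrite -dot_col col_tanmx dotBr dotZr !dot_delta mxE; field.
Qed.

Lemma dot_tanmx t : dot g (tanmx *m t) = 0.
Proof. by rewrite /dot mulmxA trmx_tanmx mul0mx mxE. Qed.

Lemma dot_dir t : dot g (dir t) = g i0 ord0.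
Proof. by rewrite /dir dotDr dot_tanmx addr0 dot_delta. Qed.

Lemma dir_row' v : dot g v = g i0 ord0 -> dir (row' i0 v) = v.
Proof.
move=> gv; have := dot_dir (row' i0 v); rewrite -gv !dot_lift.
have lift_eq j : dir (row' i0 v) (lift i0 j) ord0 = v (lift i0 j) ord0.
  by have := congr1 (fun M : 'cV[R]_k => M j ord0) (row'_dir (row' i0 v)); rewrite !mxE.
under eq_bigr do rewrite lift_eq.
move=> /addIr /(mulfI gi0) vi0; apply/matrixP => i j; have -> : j = ord0 := ord1 j.
by case: (unliftP i0 i) => [j' ->|->].
Qed.

Lemma dir_span a t : (forall j, dot a (col j tanmx) = 0) -> dot a (dir t) = 0 -> a = 0.
Proof.
move=> a_tan a_dir; have aT : a^T *m tanmx = 0.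
  by apply/matrixP => i j; have -> : i = ord0 := ord1 i; rewrite -dot_col a_tan mxE.
have ai0 : a i0 ord0 = 0.
  by move: a_dir; rewrite /dir dotDr {2}/dot mulmxA aT mul0mx mxE addr0 dot_delta.
apply/matrixP => i j; have -> : j = ord0 := ord1 j.
rewrite mxE; case: (unliftP i0 i) => [j' ->|->] //.
by move: (a_tan j'); rewrite col_tanmx dotBr dotZr !dot_delta ai0 mulr0 subr0.
Qed.

End TangentChart.

Section MatrixConvergence.
Variables (R : realType) (T : Type) (F : set_system T).
Context {FF : Filter F}.

Lemma cvg_entry m n (G : T -> 'M[R]_(m, n)) (M : 'M[R]_(m, n)) i j :
  G @ F --> M -> (fun y => G y i j) @ F --> M i j.
Proof. by move=> GM; apply: cvg_comp GM (@coord_continuous R m n i j M). Qed.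

Lemma cvg_entrywise m n (G : T -> 'M[R]_(m, n)) (M : 'M[R]_(m, n)) :
  (forall i j, (fun y => G y i j) @ F --> M i j) -> G @ F --> M.
Proof.
move=> GM O [P nP sub].
apply: (filterS (P := fun y => forall i j, P i j (G y i j))) => [y hy|].
  exact: sub.
by apply: filter_forall => i; apply: filter_forall => j; exact: GM.
Qed.

Lemma cvg_mulmx m n p (G : T -> 'M[R]_(m, n)) (H : T -> 'M[R]_(n, p))
    (M : 'M[R]_(m, n)) (N : 'M[R]_(n, p)) :
  G @ F --> M -> H @ F --> N -> (fun y => G y *m H y) @ F --> M *m N.
Proof.
move=> GM HN; apply: cvg_entrywise => i j; rewrite mxE; under eq_fun do rewrite mxE.
apply: cvg_big => [|l _]; first exact: add_continuous.
by apply: cvgM; apply: cvg_entry.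
Qed.

Lemma cvg_trmx m n (G : T -> 'M[R]_(m, n)) (M : 'M[R]_(m, n)) :
  G @ F --> M -> (fun y => (G y)^T) @ F --> M^T.
Proof.
move=> GM; apply: cvg_entrywise => i j.
by rewrite mxE; under eq_fun do rewrite mxE; exact: cvg_entry.
Qed.

Lemma cvg_row' m n (G : T -> 'M[R]_(m, n)) (M : 'M[R]_(m, n)) i0 :
  G @ F --> M -> (fun y => row' i0 (G y)) @ F --> row' i0 M.
Proof.
move=> GM; apply: cvg_entrywise => i j.
by rewrite mxE; under eq_fun do rewrite mxE; exact: cvg_entry.
Qed.

Lemma cvg_dot n (a : 'cV[R]_n) (G : T -> 'cV[R]_n) v :
  G @ F --> v -> (fun y => dot a (G y)) @ F --> dot a v.
Proof. by move=> Gv; apply: cvg_entry; apply: cvg_mulmx Gv; exact: cvg_cst. Qed.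

Lemma cvg_bform n (A : 'M[R]_n) (G : T -> 'cV[R]_n) v :
  G @ F --> v -> (fun y => bform A (G y) (G y)) @ F --> bform A v v.
Proof.
by move=> Gv; apply/cvg_entry/(cvg_mulmx (cvg_mulmx (cvg_trmx Gv) (cvg_cst A)) Gv).
Qed.

Lemma cvg_quadval n (A : 'M[R]_n) b c (G : T -> 'cV[R]_n) s :
  G @ F --> s -> (fun y => quadval A b c (G y)) @ F --> quadval A b c s.
Proof.
move=> Gs; apply: cvgD; last exact: cvg_cst.
by apply: cvgD; [apply: cvgM; [exact: cvg_cst | exact: cvg_bform] | exact: cvg_dot].
Qed.

End MatrixConvergence.

Lemma hausdorff_null_sub1 (R : realType) (n s : nat) (E : set 'cV[R]_n) q :
  (0 < s)%N -> E `<=` [set q] -> hausdorff_null s E.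
Proof.
move=> s_gt0 Eq delta eps delta0 eps0; exists (fun=> [set q]), (fun=> 0).
split; first by move=> x /Eq ->; exists 0%N.
split; first by move=> i; rewrite lexx delta0.
split; first by move=> i x y -> ->; rewrite expr0n /= big1 // => j _; rewrite subrr expr0n.
by move=> N; rewrite big1 // => i _; rewrite expr0n; case: s s_gt0.
Qed.

Lemma near0_line (R : realType) (V : normedModType R) (O : set V) t e :
  open O -> O t -> \forall s \near (0 : R), O (t + s *: e).
Proof.
move=> oO Ot; have : (fun s : R => t + s *: e) @ 0 --> t + 0 *: e.
  by apply: cvgD; [exact: cvg_cst | apply: cvgZ; [exact: cvg_id | exact: cvg_cst]].
by rewrite scale0r addr0; apply; exact: open_nbhs_nbhs.
Qed.

Section RealRoots.
Variable R : realType.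

Lemma near0_poly2_eq0 (a0 a1 a2 : R) :
  (\forall s \near 0, a0 + a1 * s + a2 * s ^+ 2 = 0) -> [/\ a0 = 0, a1 = 0 & a2 = 0].
Proof.
move=> /nbhs_ballP [e e0 P]; pose h := e / 2.
have h0 : 0 < h by rewrite divr_gt0.
have ball_h x : `|x| = h -> ball (0 : R) e x.
  by move=> xh; rewrite -ball_normE /= sub0r normrN xh /h ltr_pdivrMr // ltr_pMr // ltr1n.
have P0 := P 0 (ballxx _ e0); have := P h (ball_h h (gtr0_norm h0)).
have hm : `|- h| = h by rewrite normrN gtr0_norm.
have := P (- h) (ball_h (- h) hm).
rewrite expr0n /= !mulr0 !addr0 in P0; rewrite P0 !add0r sqrrN => Pm Pp.
have a2h : a2 * h ^+ 2 = 0 by lra.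
have a1h : a1 * h = 0 by lra.
have hn0 : h != 0 by rewrite gt_eqF.
split=> //; first by move/eqP: a1h; rewrite mulf_eq0 (negbTE hn0) orbF => /eqP.
by move/eqP: a2h; rewrite mulf_eq0 expf_eq0 (negbTE hn0) andbF orbF => /eqP.
Qed.

Lemma near0_quadratic_sign (d K : R) : d != 0 ->
  \forall h \near 0^'+,
    (h * d + 2^-1 * h ^+ 2 * K) * ((- h) * d + 2^-1 * (- h) ^+ 2 * K) < 0.
Proof.
move=> d0; have dK : 0 < 2 * `|d| / (`|K| + 1).
  by rewrite divr_gt0 ?mulr_gt0 ?normr_gt0 // ltr_pwDr.
near=> h.
have h0 : 0 < h by near: h; exact: nbhs_right_gt.
have hK : h * (`|K| + 1) < 2 * `|d|.
  by rewrite -ltr_pdivlMr ?ltr_pwDr //; near: h; exact: nbhs_right_lt.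
have {hK} : (h * K) ^+ 2 < (2 * d) ^+ 2.
  rewrite -[(h * K) ^+ 2](real_normK (num_real _)) -[(2 * d) ^+ 2](real_normK (num_real _)).
  rewrite !normrM (gtr0_norm h0) (ger0_norm (ler0n _ 2)).
  rewrite ltr_pXn2r ?nnegrE ?mulr_ge0 ?normr_ge0 ?ltW //; nra.
have -> : (h * d + 2^-1 * h ^+ 2 * K) * ((- h) * d + 2^-1 * (- h) ^+ 2 * K) =
    h ^+ 2 * ((h * K) ^+ 2 - (2 * d) ^+ 2) / 4 by field.
have := exprn_gt0 2 h0; nra.
Unshelve. all: by end_near. Qed.

Lemma IVT_mul_lt0 (f : R -> R) a b : a <= b -> {within `[a, b], continuous f} ->
  f a * f b < 0 -> exists2 x, x \in `[a, b] & f x = 0.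
Proof.
move=> ab cf fab; apply: IVT => //; rewrite ge_min le_max.
have [fa_lt0|fa_ge0] := ltP (f a) 0.
  have fb_gt0 : 0 < f b by nra.
  by rewrite (ltW fa_lt0) (ltW fb_gt0) orbT.
have fb_lt0 : f b < 0 by nra.
by rewrite (ltW fb_lt0) orbT; apply/orP; left.
Qed.

Lemma near_sign_change_root (X : topologicalType) (phi : R -> X -> R) mu0 x0 (M : set R) :
  (forall x, continuous (phi^~ x)) -> (forall mu, continuous (phi mu)) -> nbhs mu0 M ->
  (\forall h \near 0^'+, phi (mu0 + h) x0 * phi (mu0 - h) x0 < 0) ->
  \forall x \near x0, exists2 mu, M mu & phi mu x = 0.
Proof.
move=> cphi_mu cphi_x nM phi_sign.
have [h [h0 hM sign_x0]] : exists h, [/\ 0 < h,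
    {in `[mu0 - h, mu0 + h], forall mu, M mu} & phi (mu0 + h) x0 * phi (mu0 - h) x0 < 0].
  near (0 : R)^'+ => h; exists h; split; last by near: h.
  - by near: h; exact: nbhs_right_gt.
  - by near: h; apply/at_right_in_segment.
near=> x.
have [|||mu mu_in phi0] := @IVT_mul_lt0 (phi^~ x) (mu0 - h) (mu0 + h).
- by lra.
- exact: continuous_subspaceT.
- by rewrite mulrC; near: x; exact: (cvgr_lt _ (cvgM (cphi_x _ x0) (cphi_x _ x0))).
by exists mu => //; exact: hM.
Unshelve. all: by end_near. Qed.

End RealRoots.

Section PolynomialFunctions.
Variables (R : realType) (m : nat).
Implicit Types (P Q : mpolyfun R m) (t : 'cV[R]_m).

Definition pconst (a : R) : mpolyfun R m := [:: (a, [ffun=> 0%N])].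
Definition pvar (j : 'I_m) : mpolyfun R m := [:: (1, [ffun i => (i == j) : nat])].
Definition padd P Q : mpolyfun R m := P ++ Q.
Definition pmul P Q : mpolyfun R m :=
  [seq (x.1 * y.1, [ffun i => (x.2 i + y.2 i)%N])
  | x : R * {ffun 'I_m -> nat} <- P, y : R * {ffun 'I_m -> nat} <- Q].
Definition psum (I : finType) (F : I -> mpolyfun R m) : mpolyfun R m :=
  \big[padd/[::]]_i F i.

Lemma peval_const a t : peval (pconst a) t = a.
Proof. by rewrite /peval big_seq1 big1 ?mulr1 // => i _; rewrite ffunE. Qed.

Lemma peval_var j t : peval (pvar j) t = t j ord0.
Proof.
rewrite /peval big_seq1 /= mul1r (bigD1 j) //= ffunE eqxx expr1 big1 ?mulr1 //.
by move=> i /negbTE ij; rewrite ffunE ij.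
Qed.

Lemma peval_add P Q t : peval (padd P Q) t = peval P t + peval Q t.
Proof. by rewrite /peval big_cat. Qed.

Lemma peval_mul P Q t : peval (pmul P Q) t = peval P t * peval Q t.
Proof.
rewrite /peval big_allpairs_dep mulr_suml; apply: eq_bigr => x _.
rewrite mulr_sumr; apply: eq_bigr => y _ /=.
under eq_bigr do rewrite ffunE exprD.
by rewrite big_split /=; ring.
Qed.

Lemma peval_sum (I : finType) (F : I -> mpolyfun R m) t :
  peval (psum F) t = \sum_i peval (F i) t.
Proof.
by rewrite (big_morph (fun P => peval P t) (fun P Q => peval_add P Q t) (big_nil _ _ _ _)).
Qed.

Definition paffine n (e : 'cV[R]_n) (M : 'M[R]_(n, m)) (i : 'I_n) : mpolyfun R m :=
  padd (pconst (e i ord0)) (psum (fun j => pmul (pconst (M i j)) (pvar j))).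

Lemma peval_affine n (e : 'cV[R]_n) M i t : peval (paffine e M i) t = (e + M *m t) i ord0.
Proof.
rewrite peval_add peval_const peval_sum !mxE; congr (_ + _).
by apply: eq_bigr => j _; rewrite peval_mul peval_const peval_var.
Qed.

Definition pbform n (A : 'M[R]_n) (P : 'I_n -> mpolyfun R m) : mpolyfun R m :=
  psum (fun i => psum (fun j => pmul (pmul (P i) (pconst (A i j))) (P j))).

Lemma peval_bform n (A : 'M[R]_n) (P : 'I_n -> mpolyfun R m) t :
  peval (pbform A P) t = bform A (\col_i peval (P i) t) (\col_i peval (P i) t).
Proof.
rewrite bformE peval_sum; apply: eq_bigr => i _; rewrite peval_sum; apply: eq_bigr => j _.
by rewrite !peval_mul peval_const !mxE.
Qed.

End PolynomialFunctions.
Arguments pconst {R m}.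
Arguments pvar {R m}.

Section CentralProjection.
Variables (R : realType) (k : nat).
Implicit Types (r : 'cV[R]_k) (s : 'cV[R]_k.+1).

Definition homog r : 'cV[R]_k.+1 := \col_i oapp (fun j => r j ord0) 1 (unlift ord0 i).
Definition dehomog s : 'cV[R]_k := \col_j (s (lift ord0 j) ord0 / s ord0 ord0).

Lemma dehomogZ_homog mu r : mu != 0 -> dehomog (mu *: homog r) = r.
Proof.
move=> mu0; apply/matrixP => j j'; have -> : j' = ord0 := ord1 j'.
by rewrite !mxE liftK unlift_none /=; field.
Qed.

Lemma homog_dehomog s : s ord0 ord0 != 0 -> s ord0 ord0 *: homog (dehomog s) = s.
Proof.
move=> s0; apply/matrixP => i j; have -> : j = ord0 := ord1 j.
by rewrite !mxE; case: (unliftP ord0 i) => [j' ->|->] /=; rewrite ?mxE; field.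
Qed.

Lemma continuous_homog : continuous homog.
Proof.
move=> r; apply: (@cvg_entrywise _ _ (nbhs r)) => i j.
rewrite mxE; under eq_fun do rewrite mxE.
by case: unlift => [j'|] /=; [exact: cvg_entry cvg_id | exact: cvg_cst].
Qed.

Lemma nbhs_dehomog_quadric (A : 'M[R]_k.+1) b c s0 (V : set 'cV[R]_k.+1) :
  A^T = A -> quadric A b c s0 -> s0 ord0 ord0 != 0 -> dot (grad A b s0) s0 != 0 ->
  nbhs s0 V -> nbhs (dehomog s0) (dehomog @` (quadric A b c `&` V)).
Proof.
(* The ray from the origin through [s0] crosses the quadric transversally at [s0], so
   the rays with nearby directions [r] still cross it near [s0]. *)
move=> symA /quadricE Ss0 mu0_neq0 transv nV.
set mu0 := s0 ord0 ord0; set r0 := dehomog s0.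
have s0E : mu0 *: homog r0 = s0 := homog_dehomog mu0_neq0.
pose phi mu r := quadval A b c (mu *: homog r).
have cphi_mu r : continuous (phi^~ r).
  by move=> mu; apply: cvg_quadval; apply: cvgZ; [exact: cvg_id | exact: cvg_cst].
have cphi_r mu : continuous (phi mu).
  move=> r; apply: (@cvg_quadval _ _ (nbhs r)).
  by apply: cvgZ; [exact: cvg_cst | exact: continuous_homog].
pose d := dot (grad A b s0) (homog r0); pose K := bform A (homog r0) (homog r0).
have d_neq0 : d != 0.
  by apply: contraNneq transv => d0; rewrite -{2}s0E dotZr -/d d0 mulr0.
have phi_r0 h : phi (mu0 + h) r0 = h * d + 2^-1 * h ^+ 2 * K.
  by rewrite /phi scalerDl s0E quadvalDr // Ss0 dotZr bformZl bformZr -/d -/K; ring.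
have [[M B] /= [nM nB] MB] : \forall mu \near mu0 & r \near r0, V (mu *: homog r).
  have homogZ_cvg : (fun z : R * 'cV[R]_k => z.1 *: homog z.2)
      @ filter_prod (nbhs mu0) (nbhs r0) --> s0.
    rewrite -s0E; apply: cvgZ; first exact: cvg_fst.
    by apply: cvg_comp; [exact: cvg_snd | exact: continuous_homog].
  exact: homogZ_cvg nV.
have nM0 : nbhs mu0 (M `&` [set mu | mu != 0]).
  apply: filterI nM _; apply: open_nbhs_nbhs.
  by split; [exact: open_neq | exact: mu0_neq0].
have phi_sign : \forall h \near 0^'+, phi (mu0 + h) r0 * phi (mu0 - h) r0 < 0.
  by under eq_near do rewrite !phi_r0; exact: near0_quadratic_sign.
apply: filterS (filterI nB (near_sign_change_root cphi_mu cphi_r nM0 phi_sign)).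
move=> r [Br [mu [Mmu mu_neq0] phi0]].
exists (mu *: homog r); last exact: dehomogZ_homog.
by split; [exact: phi0 | exact: (MB (mu, r))].
Qed.

End CentralProjection.

Section StereographicProjection.
Variables (R : realType) (k : nat) (A : 'M[R]_k.+1) (b : 'cV[R]_k.+1) (c : R).
Variables (p : 'cV[R]_k.+1) (i0 : 'I_k.+1).
Hypothesis symA : A^T = A.
Hypothesis Sp : quadric A b c p.
Local Notation S := (quadric A b c).
Local Notation g := (grad A b p).
Hypothesis gi0 : g i0 ord0 != 0.
Implicit Types (t : 'cV[R]_k) (s : 'cV[R]_k.+1).

Definition dirq t := bform A (dir g i0 t) (dir g i0 t).
Definition stereo t := p + (- 2 * g i0 ord0 / dirq t) *: dir g i0 t.
Definition stereo_inv s := row' i0 ((g i0 ord0 / dot g (s - p)) *: (s - p)).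
Local Notation D := [set t | dirq t != 0].

Lemma stereo_in t : dirq t != 0 -> S (stereo t).
Proof.
move=> q0; have /quadricE Sp0 := Sp; apply/quadricE.
by rewrite quadvalDr // Sp0 add0r dotZr bformZl bformZr (dot_dir gi0) -/(dirq t); field.
Qed.

Lemma stereo_subE t : stereo t - p = (- 2 * g i0 ord0 / dirq t) *: dir g i0 t.
Proof. by rewrite /stereo addrC addKr. Qed.

Lemma dot_stereo_sub_neq0 t : dirq t != 0 -> dot g (stereo t - p) != 0.
Proof.
by move=> q0; rewrite stereo_subE dotZr (dot_dir gi0) !mulf_neq0 ?invr_neq0 ?oppr_eq0.
Qed.

Lemma stereoK t : dirq t != 0 -> stereo_inv (stereo t) = t.
Proof.
move=> q0; rewrite /stereo_inv stereo_subE dotZr (dot_dir gi0) scalerA.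
have -> : g i0 ord0 / (- 2 * g i0 ord0 / dirq t * g i0 ord0) *
    (- 2 * g i0 ord0 / dirq t) = 1 by field; rewrite q0 gi0.
by rewrite scale1r row'_dir.
Qed.

Lemma stereo_invK s : ~ contains_line S -> S s -> s != p ->
  dirq (stereo_inv s) != 0 /\ stereo (stereo_inv s) = s.
Proof.
move=> noline Ss sp; have d0 := dot_grad_chord_neq0 symA noline Sp Ss sp.
have dirE : dir g i0 (stereo_inv s) = (g i0 ord0 / dot g (s - p)) *: (s - p).
  by apply: dir_row' => //; rewrite dotZr; field.
have qE : dirq (stereo_inv s) = (g i0 ord0 / dot g (s - p)) ^+ 2 * (- 2 * dot g (s - p)).
  by rewrite /dirq dirE bformZl bformZr (bform_chord symA Sp Ss); ring.
have q0 : dirq (stereo_inv s) != 0 by rewrite qE !mulf_neq0 ?expf_neq0 ?invr_neq0 ?oppr_eq0.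
split=> //; rewrite /stereo dirE scalerA qE.
have -> : - 2 * g i0 ord0 / ((g i0 ord0 / dot g (s - p)) ^+ 2 * (- 2 * dot g (s - p))) *
    (g i0 ord0 / dot g (s - p)) = 1 by field; rewrite d0 gi0.
by rewrite scale1r addrC subrK.
Qed.

Lemma image_stereo_sub : stereo @` D `<=` S.
Proof. by move=> _ [t q0 <-]; exact: stereo_in. Qed.

Lemma quadric_sub_image_stereo : ~ contains_line S ->
  S `\` stereo @` D `<=` [set p].
Proof.
move=> noline s [Ss not_img]; have [//|sp] := eqVneq s p; case: not_img.
by have [q0 e] := stereo_invK noline Ss sp; exists (stereo_inv s).
Qed.

Lemma cvg_dirq t : dirq @ nbhs t --> dirq t.
Proof.
apply: (@cvg_bform _ _ (nbhs t)); apply: cvgD; first exact: cvg_cst.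
by apply: cvg_mulmx; [exact: cvg_cst | exact: cvg_id].
Qed.

Lemma open_dirq : open D.
Proof. by rewrite openE => t; exact: cvgr_neq0 (@cvg_dirq t). Qed.

Lemma cvg_stereo_inv s : dot g (s - p) != 0 -> stereo_inv @ nbhs s --> stereo_inv s.
Proof.
have sub_cvg : (fun s' => s' - p) @ nbhs s --> s - p.
  by apply: cvgB; [exact: cvg_id | exact: cvg_cst].
move=> d0; apply: (@cvg_row' _ _ (nbhs s)); apply: cvgZ; last exact: sub_cvg.
by apply: cvgM; [exact: cvg_cst | apply: cvgV => //; exact: cvg_dot sub_cvg].
Qed.

Lemma stereo_hyperplane_cond O t0 : (0 < k)%N -> ~ contains_line S ->
  open O -> O t0 -> O `<=` D -> hyperplane_cond stereo O.
Proof.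
move=> k_gt0 noline oO Ot0 OD [a [beta [a0 a_beta]]].
pose c0 := dot a p - beta; pose w j := col j (tanmx g i0).
(* Cleared of its denominator, [dot a (stereo t) = beta] is polynomial in [t]; along
   the lines [t0 + s e_j] all its coefficients in [s] must vanish. *)
have key t : O t -> c0 * dirq t - 2 * g i0 ord0 * dot a (dir g i0 t) = 0.
  move=> Ot; have : dot a (stereo t) = beta := a_beta t Ot.
  by rewrite /stereo dotDr dotZr /c0 => <-; field; exact: OD.
have coef j : 2 * c0 * bform A (dir g i0 t0) (w j) - 2 * g i0 ord0 * dot a (w j) = 0
    /\ c0 * bform A (w j) (w j) = 0.
  have [] := @near0_poly2_eq0 _ (c0 * dirq t0 - 2 * g i0 ord0 * dot a (dir g i0 t0))
    (2 * c0 * bform A (dir g i0 t0) (w j) - 2 * g i0 ord0 * dot a (w j))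
    (c0 * bform A (w j) (w j)) => //.
  apply: filterS (near0_line (delta_mx j ord0) oO Ot0) => s /key.
  rewrite /dirq dirDZ -colE /w; move: (dir g i0 t0) (col j _) => v u.
  rewrite !bformDl !bformDr !bformZl !bformZr dotDr dotZr (bformC u v) //.
  by move=> e; rewrite -[X in _ = X]e; ring.
(* Either [a] is orthogonal to every direction, or the [s^2] coefficient exhibits an
   isotropic tangent direction at [p], i.e. a line in [S]. *)
have [c0_0 | c0_neq0] := eqVneq c0 0.
  have gi0_2 : 2 * g i0 ord0 != 0 by rewrite mulf_neq0 ?pnatr_eq0.
  move/eqP: a0; apply; apply: (@dir_span _ _ g i0 a t0) => [j|].
    by apply: (mulfI gi0_2); rewrite mulr0; have [+ _] := coef j; rewrite c0_0; lra.
  by apply: (mulfI gi0_2); rewrite mulr0; have := key t0 Ot0; rewrite c0_0; lra.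
pose j0 := Ordinal k_gt0.
have [_ /eqP] := coef j0; rewrite mulf_eq0 (negbTE c0_neq0) /= => /eqP ww.
have gw : dot g (w j0) = 0 by rewrite /w colE (dot_tanmx gi0).
move/negP: (col_tanmx_neq0 g i0 j0); apply; apply/eqP.
by have := isotropic_tangent_eq0 symA noline Sp gw ww; rewrite /w.
Qed.

Lemma exists_transversal O t0 : (0 < k)%N -> ~ contains_line S ->
  open O -> O t0 -> O `<=` D ->
  exists2 t, O t & dot b (stereo t) + 2 * c != 0.
Proof.
move=> k_gt0 noline oO Ot0 OD.
case: (pselect (exists2 t, O t & dot b (stereo t) + 2 * c != 0)) => // no_t; exfalso.
have b_stereo t : O t -> dot b (stereo t) = - 2 * c.
  move=> Ot; have [e|ne] := eqVneq (dot b (stereo t) + 2 * c) 0; first lra.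
  by case: no_t; exists t.
(* For [b = 0] we get [c = 0], and a cone with vertex [0] containing no line is
   [[set 0]], which cannot contain both [p] and [stereo t0]. *)
have [b0 | b_neq0] := eqVneq b 0; last first.
  by apply: (stereo_hyperplane_cond k_gt0 noline oO Ot0 OD); exists b, (- 2 * c).
have c0 : c = 0 by have := b_stereo t0 Ot0; rewrite b0 dot0l; lra.
have := dot_stereo_sub_neq0 (OD t0 Ot0).
rewrite (quadric_cone_eq0 symA b0 c0 noline (stereo_in (OD t0 Ot0))).
by rewrite (quadric_cone_eq0 symA b0 c0 noline Sp) subrr dotC dot0l eqxx.
Qed.

Lemma stereo_inner_point O t : ~ contains_line S -> open O -> O t ->
  O `<=` D -> stereo t ord0 ord0 != 0 ->
  dot b (stereo t) + 2 * c != 0 -> inner_point_cond stereo O.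
Proof.
move=> noline oO Ot OD s0_neq0 transv; exists t; split=> //.
have q0 := OD t Ot; have Ss0 := stereo_in q0.
pose V := [set s | dot g (s - p) != 0 /\ O (stereo_inv s)].
have nV : nbhs (stereo t) V.
  have d0 := dot_stereo_sub_neq0 q0.
  have dot_cvg : (fun s => dot g (s - p)) @ nbhs (stereo t) --> dot g (stereo t - p).
    apply: (@cvg_dot _ _ (nbhs (stereo t))).
    by apply: cvgB; [exact: cvg_id | exact: cvg_cst].
  apply: filterI; first exact: cvgr_neq0 dot_cvg d0.
  by apply: (cvg_stereo_inv d0); rewrite stereoK //; exact: open_nbhs_nbhs.
have transv' : dot (grad A b (stereo t)) (stereo t) != 0.
  by rewrite (dot_grad_self symA Ss0) oppr_eq0.
apply: filterS (nbhs_dehomog_quadric symA Ss0 s0_neq0 transv' nV).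
move=> _ [s [Ss [d0 Os]] <-]; exists (stereo_inv s) => //.
have sp : s != p by apply: contraNneq d0 => ->; rewrite subrr dotC dot0l.
by have [_ e] := stereo_invK noline Ss sp; rewrite /normalized e.
Qed.

Definition dir_poly (i : 'I_k.+1) : mpolyfun R k :=
  paffine (delta_mx i0 ord0) (tanmx g i0) i.
Definition dirq_poly : mpolyfun R k := pbform A dir_poly.

Lemma peval_dirq_poly t : peval dirq_poly t = dirq t.
Proof.
have dirE : \col_i peval (dir_poly i) t = dir g i0 t.
  by apply/matrixP => i j; have -> : j = ord0 := ord1 j; rewrite mxE peval_affine.
by rewrite peval_bform dirE.
Qed.

Definition stereo_rat : ratvecfun R k k.+1 := RatVecFun
  (fun i => padd (pmul (pconst (p i ord0)) dirq_poly)
                 (pmul (pconst (- 2 * g i0 ord0)) (dir_poly i)))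
  (fun=> dirq_poly).

Lemma rveval_stereo_rat t : dirq t != 0 -> rveval stereo_rat t = stereo t.
Proof.
move=> q0; apply/matrixP => i j; have -> : j = ord0 := ord1 j.
rewrite [LHS]mxE /= peval_add !peval_mul !peval_const peval_dirq_poly peval_affine.
rewrite -/(dir g i0 t) /stereo; move: (dir g i0 t) (g i0 ord0) => v gi.
by rewrite !mxE; field.
Qed.

End StereographicProjection.

Lemma eq_hyperplane_cond (R : realType) m n (f f' : 'cV[R]_m -> 'cV[R]_n) O :
  (forall t, O t -> f t = f' t) -> hyperplane_cond f O -> hyperplane_cond f' O.
Proof.
move=> ff' hf [a [beta [a0 a_beta]]]; apply: hf; exists a, beta; split=> // t Ot.
by rewrite ff' //; exact: a_beta.
Qed.

Lemma eq_inner_point_cond (R : realType) k (f f' : 'cV[R]_k -> 'cV[R]_k.+1) O :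
  (forall t, O t -> f t = f' t) -> inner_point_cond f O -> inner_point_cond f' O.
Proof.
move=> ff' [t [Ot nt]]; exists t; split=> //.
have -> : normalized f' @` O = normalized f @` O.
  by apply/seteqP; split=> _ [u Ou <-]; exists u => //; rewrite /normalized ff'.
by rewrite /normalized -ff'.
Qed.

Theorem theorem2 (R : realType) (k : nat) (A : 'M[R]_k.+1) (b : 'cV[R]_k.+1) (c : R) :
  (1 <= k)%N -> A^T = A -> A != 0 ->
  ~ contains_line (quadric A b c) ->
  (exists x y, quadric A b c x /\ quadric A b c y /\ x != y) ->
  exists (sig : ratvecfun R k k.+1) (D : set 'cV[R]_k),
    open D /\ defined_on sig D /\
    hausdorff_null k (rveval sig @` D `\` quadric A b c) /\
    hausdorff_null k (quadric A b c `\` rveval sig @` D) /\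
    (forall O : set 'cV[R]_k,
        open O -> O !=set0 ->
        O `<=` D `\` [set t | rveval sig t ord0 ord0 = 0] ->
        hyperplane_cond (rveval sig) O /\ inner_point_cond (rveval sig) O).
Proof.
move=> k_gt0 symA _ noline [p [s [Sp [Ss ps]]]].
have sp : s != p by rewrite eq_sym.
have [i0 gi0] := cV_neq0_coord (grad_neq0 symA noline Sp Ss sp).
pose D := [set t | dirq A b p i0 t != 0].
have sigE t : D t -> stereo A b p i0 t = rveval (stereo_rat A b p i0) t.
  by move/rveval_stereo_rat.
exists (stereo_rat A b p i0), D; rewrite -(eq_imagel sigE).
split; first exact: open_dirq.
split; first by move=> t Dt i; rewrite /= peval_dirq_poly.
split.
  apply: (hausdorff_null_sub1 (q := p) k_gt0) => x [].
  by move=> /(image_stereo_sub symA Sp gi0) Sx /(_ Sx).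
split; first exact: hausdorff_null_sub1 k_gt0 (quadric_sub_image_stereo symA Sp gi0 noline).
move=> O oO [t0 Ot0] OD'; have OD : O `<=` D by move=> t /OD' [].
have Osig t : O t -> stereo A b p i0 t = rveval (stereo_rat A b p i0) t.
  by move/OD/sigE.
split.
  exact: eq_hyperplane_cond Osig
    (stereo_hyperplane_cond symA Sp gi0 k_gt0 noline oO Ot0 OD).
have [t Ot transv] := exists_transversal symA Sp gi0 k_gt0 noline oO Ot0 OD.
apply: (eq_inner_point_cond Osig).
apply: (stereo_inner_point symA Sp gi0 noline oO Ot OD) transv.
by have [_] := OD' t Ot; rewrite /= -Osig //; move/eqP.
Qed.
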